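(* For every $d\ge 2$, $\mathcal{NN}_{\mathrm{LReLU}}(d,d,d)$ compactly approximates $\mathrm{INN}_{\mathrm{ACF}_d}$: for every $f\in\mathrm{INN}_{\mathrm{ACF}_d}$, every compact $K\subset\mathbb{R}^d$ and every $\epsilon>0$ there exists $g\in\mathcal{NN}_{\mathrm{LReLU}}(d,d,d)$ with $\sup_{x\in K}\|f(x)-g(x)\|_\infty<\epsilon$.
   Context: For $\beta\in\mathbb{R}$, $\mathrm{LReLU}_\beta(x)=x$ if $x\ge 0$ and $\beta x$ if $x<0$, applied componentwise to vectors. $\mathcal{NN}_{\mathrm{LReLU}}(d,d,d)$ is the set of all maps $W_{N+1}\circ\mathrm{LReLU}_{\beta_N}\circ W_N\circ\cdots\circ\mathrm{LReLU}_{\beta_1}\circ W_1:\mathbb{R}^d\to\mathbb{R}^d$ with $N\in\mathbb{N}_0$, $\beta_i\in\mathbb{R}$, integers $1\le d_1,\dots,d_N\le d$, $d_0=d_{N+1}=d$, and $W_i:\mathbb{R}^{d_{i-1}}\to\mathbb{R}^{d_i}$ affine. $\mathrm{ACF}_d$ (single-coordinate affine coupling flows) is the set of maps $\mathbb{R}^d\to\mathbb{R}^d$ of the form $x\mapsto(x_1,\dots,x_{d-1},\exp(s(x_{1:d-1}))\,x_d+t(x_{1:d-1}))$ with $s,t:\mathbb{R}^{d-1}\to\mathbb{R}$ continuous, where $x_{1:d-1}=(x_1,\dots,x_{d-1})$. For a set $\mathcal{G}$ of invertible maps $\mathbb{R}^d\to\mathbb{R}^d$, $\mathrm{INN}_{\mathcal{G}}$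 is the set of all compositions $W_1\circ g_1\circ W_2\circ g_2\circ\cdots\circ W_n\circ g_n\circ W_{n+1}$ with $n\in\mathbb{N}$, $g_i\in\mathcal{G}$ and $W_i$ invertible affine maps of $\mathbb{R}^d$. *)

From HB Require Import structures.
From mathcomp Require Import all_boot all_order all_algebra.
From mathcomp Require Import all_classical all_reals all_analysis.
Set Implicit Arguments. Unset Strict Implicit. Unset Printing Implicit Defensive.
Import Order.TTheory GRing.Theory Num.Theory.
Import numFieldTopology.Exports numFieldNormedType.Exports.
Local Open Scope ring_scope.
Local Open Scope classical_set_scope.

Section Defs.
Variable R : realType.

Definition lrelu (beta : R) (x : R) : R := if 0 <= x then x else beta * x.

Definition lrelu_vec n (beta : R) (v : 'rV[R]_n) : 'rV[R]_n := map_mx (lrelu beta) v.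

Definition affine m k (A : 'M[R]_(m, k)) (b : 'rV[R]_k) : 'rV[R]_m -> 'rV[R]_k :=
  fun x => x *m A + b.

(* nn_from d m f : f : R^m -> R^d is of the form
   W_{N+1} o LReLU_{beta_N} o W_N o ... o LReLU_{beta_1} o W_1
   with N >= 0 and all hidden widths d_i in [1, d]. *)
Inductive nn_from (d : nat) : forall m, ('rV[R]_m -> 'rV[R]_d) -> Prop :=
| nn_out m (A : 'M[R]_(m, d)) (b : 'rV[R]_d) : @nn_from d m (affine A b)
| nn_layer m k (A : 'M[R]_(m, k)) (b : 'rV[R]_k) (beta : R)
    (g : 'rV[R]_k -> 'rV[R]_d) :
    (1 <= k)%N -> (k <= d)%N -> @nn_from d k g ->
    @nn_from d m (fun x => g (lrelu_vec beta (affine A b x))).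

Definition NN_LReLU (d : nat) : set ('rV[R]_d -> 'rV[R]_d) := [set f | @nn_from d d f].

Definition front d (x : 'rV[R]_d) : 'rV[R]_(d.-1) :=
  \row_(j < d.-1) x ord0 (widen_ord (leq_pred d) j).

Definition ACF (d : nat) : set ('rV[R]_d -> 'rV[R]_d) :=
  [set f : 'rV[R]_d -> 'rV[R]_d | exists s t : 'rV[R]_(d.-1) -> R, continuous s /\ continuous t /\
     forall x : 'rV[R]_d, f x = \row_(i < d) (if (i < d.-1)%N then x ord0 i
                                  else expR (s (@front d x)) * x ord0 i + t (@front d x))].

Definition inv_affine (d : nat) : set ('rV[R]_d -> 'rV[R]_d) :=
  [set W | exists (A : 'M[R]_d) (b : 'rV[R]_d), A \in unitmx /\ W = affine A b].

(* inn_tail G h : h = W_k o g_k o ... o W_n o g_n o W_{n+1} (possibly just W_{n+1}) *)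
Inductive inn_tail (d : nat) (G : set ('rV[R]_d -> 'rV[R]_d)) :
    ('rV[R]_d -> 'rV[R]_d) -> Prop :=
| inn_last W : @inv_affine d W -> @inn_tail d G W
| inn_step (W g h : 'rV[R]_d -> 'rV[R]_d) : @inv_affine d W -> G g -> @inn_tail d G h ->
    @inn_tail d G (W \o g \o h).

(* INN_G : W_1 o g_1 o W_2 o ... o W_n o g_n o W_{n+1}, n >= 1 *)
Definition INN (d : nat) (G : set ('rV[R]_d -> 'rV[R]_d)) :
    set ('rV[R]_d -> 'rV[R]_d) :=
  [set f | exists W g h, @inv_affine d W /\ G g /\ @inn_tail d G h /\ f = W \o g \o h].

Definition norm_inf d (v : 'rV[R]_d) : R := \big[Num.max/0]_(i < d) `|v ord0 i|.

End Defs.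

(* Call a continuous map of R^d approximable if LReLU networks of width at most
   d approximate it uniformly on every compact set; approximable maps are
   closed under composition.  Affine maps are networks, so it suffices to treat
   one coupling flow, which acts on the last coordinate by
   y |-> e^(s x') y + t x'.  This factors as y |-> y + C |-> ln (y + C) |->
   + s x' |-> exp |-> + (t x' - C e^(s x')), i.e. into shears
   x |-> x + phi(x') e_d and maps applying an increasing continuous function
   to y.  Such a function is approximated by a piecewise-linear interpolant,
   a composition of one-layer "bends" that are exact networks as long as x'
   stays bounded below.  The functions phi whose shear is approximable contain
   constants and coordinates and are closed under sums, scalings and
   max(., 0) (a bend conjugated by shears); hence they contain maxima of tent
   functions, which are dense in the continuous functions. *)

From HB Require Import structures.
From mathcomp Require Import all_boot all_order all_algebra.
From mathcomp Require Import all_classical all_reals all_analysis.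
From mathcomp Require Import ring lra.
Import Order.TTheory GRing.Theory Num.Theory.
Import numFieldTopology.Exports numFieldNormedType.Exports.
Local Open Scope ring_scope.
Local Open Scope classical_set_scope.
Set Implicit Arguments. Unset Strict Implicit. Unset Printing Implicit Defensive.

Section Networks.
Variable R : realType.

Lemma nn_from_comp_affine d m (g : 'rV[R]_m -> 'rV[R]_d) :
  nn_from g -> forall p (A : 'M[R]_(p, m)) b, nn_from (fun x => g (affine A b x)).
Proof.
case=> {m g} [m A' b'|m k A' b' beta g k1 kd g_nn] p A b;
  have affineA q (B : 'M[R]_(m, q)) c x :
    affine B c (affine A b x) = affine (A *m B) (b *m B + c) x
    by rewrite /affine mulmxDl mulmxA addrA.
- by rewrite (funext (affineA _ A' b')); exact: nn_out.
- under eq_fun do rewrite affineA.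
  exact: nn_layer.
Qed.

Lemma nn_from_comp d m (h : 'rV[R]_m -> 'rV[R]_d) (g : 'rV[R]_d -> 'rV[R]_d) :
  nn_from h -> nn_from g -> nn_from (fun x => g (h x)).
Proof.
move=> h_nn g_nn; elim: h_nn => {m h} [m A b|m k A b beta h k1 kd _ IH].
- exact: nn_from_comp_affine.
- exact: nn_layer IH.
Qed.

End Networks.

Section MatrixNorm.
Variable R : realType.

Lemma mx_entry_norm_le m k (v : 'M[R]_(m, k)) i j : `|v i j| <= `|v|.
Proof.
rewrite -[`|v|]/(mx_norm v) mx_normrE.
exact: (le_bigmax _ (fun ij : 'I_m * 'I_k => `|v ij.1 ij.2|) (i, j)).
Qed.

Lemma mx_norm_le m k (v : 'M[R]_(m, k)) c : 0 <= c ->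
  (forall i j, `|v i j| <= c) -> `|v| <= c.
Proof.
by move=> c0 vc; rewrite -[`|v|]/(mx_norm v) mx_normrE; apply: bigmax_le => // ij _.
Qed.

Lemma mulmx_norm_le m k (v : 'rV[R]_m) (A : 'M[R]_(m, k)) :
  `|v *m A| <= m%:R * `|A| * `|v|.
Proof.
apply: mx_norm_le => [|i j]; first by rewrite !mulr_ge0.
rewrite !mxE (le_trans (ler_norm_sum _ _ _)) //.
apply: (@le_trans _ _ (\sum_(l < m) `|A| * `|v|)).
  by apply: ler_sum => l _; rewrite normrM mulrC ler_pM ?mx_entry_norm_le //.
by rewrite sumr_const card_ord -mulrA mulr_natl.
Qed.

End MatrixNorm.

Section Continuity.
Variable R : realType.
Implicit Types U V : normedModType R.

Lemma lipschitz_continuous U V (f : U -> V) (L : R) : 0 < L ->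
  (forall x y, `|f x - f y| <= L * `|x - y|) -> continuous f.
Proof.
move=> L0 Lf x; apply/cvgrPdist_lt => e e0; apply/nbhs_normP.
exists (e / L) => [|y /= xy]; first by rewrite /= divr_gt0.
by rewrite (le_lt_trans (Lf x y)) // -ltr_pdivlMl // mulrC.
Qed.

Lemma continuous_dist_lt U V (f : U -> V) x e : {for x, continuous f} -> 0 < e ->
  exists2 d, 0 < d & forall y, `|x - y| < d -> `|f x - f y| < e.
Proof.
move=> /cvgrPdist_lt/[apply]/nbhs_normP[d d0 fxy].
by exists d => // y xy; apply: fxy; rewrite /= -ball_normE.
Qed.

Lemma compact_ball_cover U (K : set U) (r : U -> R) : compact K ->
  (forall x, K x -> 0 < r x) ->
  exists2 cs : seq U, (forall c, c \in cs -> K c) &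
    forall x, K x -> exists2 c, c \in cs & `|c - x| < r c.
Proof.
rewrite compact_cover => cK r0.
have [|D DK cover] := cK U K (fun c => ball c (r c)) (fun c _ => ball_open _ _).
  by move=> x Kx; exists x => //; apply/ballxx/r0.
exists (finmap.enum_fset D) => [c /DK|x /cover[c cD]]; first by rewrite inE.
by rewrite -ball_normE; exists c.
Qed.

Lemma continuous_compact_uniform U V (f : U -> V) (K : set U) e :
  continuous f -> compact K -> 0 < e ->
  exists2 d, 0 < d & forall x y, K x -> `|x - y| < d -> `|f x - f y| < e.
Proof.
move=> cf cK e0; have e20 : 0 < e / 2 by rewrite divr_gt0.
have /choice[r rP] x : exists r, 0 < r /\
    forall y, `|x - y| < r -> `|f x - f y| < e / 2.
  by have [r r0 Hr] := continuous_dist_lt (cf x) e20; exists r.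
have r20 c : 0 < r c / 2 by rewrite divr_gt0 // (rP c).1.
have [cs _ cover] := compact_ball_cover cK (fun c _ => r20 c).
exists (\big[Num.min/1]_(c <- cs | c \in cs) (r c / 2)) => [|x y Kx xy].
  by rewrite lt_bigmin.
have [c cs_c cx] := cover x Kx.
have cxy : `|c - y| < r c.
  have -> : c - y = (c - x) + (x - y) by rewrite addrA subrK.
  rewrite (le_lt_trans (ler_normD _ _)) // (splitr (r c)).
  by rewrite ltrD // (lt_le_trans xy) // (ge_bigmin_seq _ _ _ _ cs_c).
have -> : f x - f y = (f c - f y) - (f c - f x) by rewrite opprB [RHS]addrC addrA subrK.
rewrite (le_lt_trans (ler_normB _ _)) // (splitr e) ltrD // (rP c).2 //.
by rewrite (lt_trans cx) // ltr_pdivrMr ?(rP c).1 // ltr_pMr ?(rP c).1 ?ltr1n.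
Qed.

Lemma compact_norm_le U (K : set U) : compact K ->
  exists2 r, 0 < r & forall x, K x -> `|x| <= r.
Proof.
move=> /compact_bounded[M [_ KM]].
have M0 : 0 <= Num.max M 0 by rewrite le_max lexx orbT.
have MM : M <= Num.max M 0 by rewrite le_max lexx.
exists (Num.max M 0 + 1) => [|x Kx]; first by rewrite ltr_wpDl.
by apply: (KM (Num.max M 0 + 1)) => //; rewrite ltr_pwDr.
Qed.

Lemma continuous_compact_norm_le U V (f : U -> V) (K : set U) :
  continuous f -> compact K -> exists2 B, 0 < B & forall x, K x -> `|f x| <= B.
Proof.
move=> cf cK; have [|B B0 HB] := @compact_norm_le _ (f @` K).
  by apply: continuous_compact => //; apply: continuous_subspaceT.
by exists B => // x Kx; apply: HB; exists x.
Qed.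

End Continuity.

Section Approximation.
Variables (R : realType) (d : nat).
Local Notation V := 'rV[R]_d.

Lemma compact_norm_ball (r : R) : 0 < r -> compact [set v : V | `|v| <= r].
Proof.
move=> r0; have -> : [set v : V | `|v| <= r] = closed_ball 0 r.
  by rewrite closed_ballE //; apply/funext => v /=; rewrite /closed_ball_ /= sub0r normrN.
apply: bounded_closed_compact; last exact: closed_ball_closed.
exists r; split; first by rewrite num_real.
move=> M rM v; rewrite closed_ballE // /closed_ball_ /= sub0r normrN => vr.
exact: le_trans vr (ltW rM).
Qed.

Definition nn_approx (T : V -> V) :=
  forall K, compact K -> forall e, 0 < e ->
    exists2 g, nn_from g & forall x, K x -> `|T x - g x| < e.

Definition approximable (T : V -> V) := continuous T /\ nn_approx T.

Lemma nn_approx_limit T :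
  (forall K, compact K -> forall e, 0 < e ->
     exists2 T', nn_approx T' & forall x, K x -> `|T x - T' x| <= e) ->
  nn_approx T.
Proof.
move=> H K cK e e0; have e20 : 0 < e / 2 by rewrite divr_gt0.
have [T' T'_approx TT'] := H K cK _ e20.
have [g g_nn T'g] := T'_approx K cK _ e20; exists g => // x Kx.
rewrite -(subrK (T' x) (T x)) -addrA (le_lt_trans (ler_normD _ _)) //.
by rewrite (splitr e) ler_ltD ?TT' ?T'g.
Qed.

Lemma nn_approx_net g : nn_from g -> nn_approx g.
Proof. by move=> g_nn K _ e e0; exists g => // x _; rewrite subrr normr0. Qed.

Lemma approximable_comp T1 T2 :
  approximable T1 -> approximable T2 -> approximable (T1 \o T2).
Proof.
move=> [c1 A1] [c2 A2]; split=> [x|K cK e e0]; first exact: (continuous_comp (c2 x) (c1 _)).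
have e20 : 0 < e / 2 by rewrite divr_gt0.
have [B B0 T2B] := continuous_compact_norm_le c2 cK.
pose K2 := [set v : V | `|v| <= B + 1].
have cK2 : compact K2 by apply: compact_norm_ball; rewrite ltr_wpDr // ltW.
have [del del0 T1unif] := continuous_compact_uniform c1 cK2 e20.
have del1 : 0 < Num.min del 1 by rewrite lt_min del0 ltr01.
have [g2 g2_nn T2g2] := A2 K cK _ del1.
have [g1 g1_nn T1g1] := A1 K2 cK2 _ e20.
exists (fun x => g1 (g2 x)); first exact: nn_from_comp.
move=> x Kx /=; have := T2g2 x Kx; rewrite lt_min => /andP[T2g2_del T2g2_1].
have K2g2 : K2 (g2 x).
  have -> : g2 x = T2 x - (T2 x - g2 x) by rewrite opprB addrC subrK.
  by rewrite /K2 /= (le_trans (ler_normB _ _)) // lerD ?T2B // ltW.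
rewrite -(subrK (T1 (g2 x)) (T1 (T2 x))) -addrA (le_lt_trans (ler_normD _ _)) //.
by rewrite (splitr e) ltrD ?T1g1 // T1unif // /K2 /= (le_trans (T2B x Kx)) // lerDl.
Qed.

Lemma approximable_affine (A : 'M[R]_d) b : approximable (affine A b).
Proof.
split; last exact/nn_approx_net/nn_out.
apply: (@lipschitz_continuous _ _ _ _ (d%:R * `|A| + 1)) => [|x y].
  by rewrite ltr_wpDl // mulr_ge0.
rewrite /affine opprD addrACA subrr addr0 -mulmxBl (le_trans (mulmx_norm_le _ _)) //.
by rewrite ler_wpM2r // lerDl.
Qed.

Lemma approximable_inn_tail (G : set (V -> V)) h :
  (forall g, G g -> approximable g) -> inn_tail G h -> approximable h.
Proof.
move=> AG; elim=> [W [A [b [_ ->]]]|W g h' [A [b [_ ->]]] Gg _ Ah'].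
  exact: approximable_affine.
exact: approximable_comp (approximable_comp (approximable_affine A b) (AG g Gg)) Ah'.
Qed.

Lemma approximable_INN (G : set (V -> V)) f :
  (forall g, G g -> approximable g) -> INN G f -> approximable f.
Proof.
move=> AG [W [g [h [[A [b [_ ->]]] [Gg [tail_h ->]]]]]].
exact: approximable_comp (approximable_comp (approximable_affine A b) (AG g Gg))
  (approximable_inn_tail AG tail_h).
Qed.

End Approximation.

Section LastCoordinate.
Variables (R : realType) (n : nat).
Local Notation V := 'rV[R]_n.+1.
Local Notation W := 'rV[R]_n.

Definition add_last (G : V -> R) (x : V) : V := x + G x *: delta_mx 0 ord_max.

Lemma add_lastE G x j :
  add_last G x 0 j = if j == ord_max then x 0 j + G x else x 0 j.
Proof. by rewrite !mxE eqxx /=; case: eqP; rewrite ?mulr1 ?mulr0 ?addr0. Qed.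

Lemma add_last_last G x : add_last G x 0 ord_max = x 0 ord_max + G x.
Proof. by rewrite add_lastE eqxx. Qed.

Lemma widen_neq_ord_max (j : 'I_n) : widen_ord (leq_pred n.+1) j != ord_max.
Proof. by apply/eqP => /(congr1 val) /= jn; move: (ltn_ord j); rewrite jn ltnn. Qed.

Lemma neq_ord_max_lt (j : 'I_n.+1) : j != ord_max -> (j < n)%N.
Proof. by rewrite ltn_neqAle -ltnS ltn_ord andbT; apply: contra => /eqP jn; apply/eqP/val_inj. Qed.

Lemma front_add_last G x : front (add_last G x) = front x.
Proof.
by apply/rowP => j; rewrite !mxE (negbTE (widen_neq_ord_max j)) andbF mulr0 addr0.
Qed.

Lemma add_last_comp G1 G2 x :
  add_last G2 (add_last G1 x) = add_last (fun y => G1 y + G2 (add_last G1 y)) x.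
Proof. by rewrite /add_last scalerDl addrA. Qed.

Lemma add_last_dist G1 G2 x :
  `|add_last G1 x - add_last G2 x| <= `|G1 x - G2 x|.
Proof.
rewrite /add_last opprD addrACA subrr add0r -scalerBl.
apply: mx_norm_le => // i j; rewrite !mxE normrM ler_piMr //.
by case: (_ && _); rewrite ?normr1 ?normr0.
Qed.

Lemma continuous_add_last G : continuous G -> continuous (add_last G).
Proof.
move=> cG x; apply: (@continuousD _ _ _ id (fun y => G y *: delta_mx 0 ord_max)) => //.
exact: (continuousZr_tmp (cG x)).
Qed.

Lemma continuous_front : continuous (fun x : V => front x : W).
Proof.
apply: (@lipschitz_continuous _ _ _ _ 1) => // x y; rewrite mul1r.
apply: mx_norm_le => // i j; rewrite !mxE.
by have := mx_entry_norm_le (x - y) ord0 (widen_ord (leq_pred n.+1) j); rewrite !mxE.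
Qed.

Lemma continuous_last : continuous (fun x : V => x 0 ord_max).
Proof. exact: coord_continuous. Qed.

Lemma add_last_affine (j : 'I_n.+1) (c a : R) :
  add_last (fun x => c * x 0 j + a) =
  affine (1 + (c *: delta_mx j (0 : 'I_1)) *m delta_mx 0 ord_max) (a *: delta_mx 0 ord_max).
Proof.
apply/funext => x; rewrite /add_last /affine mulmxDr mulmx1 mulmxA -scalemxAr -colE.
by rewrite [c *: col j x]mx11_scalar mul_scalar_mx !mxE scalerDl -addrA -scalerA.
Qed.

Definition shear (phi : W -> R) : V -> V := add_last (fun x => phi (front x)).

Lemma shear_comp phi psi x :
  shear psi (shear phi x) = shear (fun v => phi v + psi v) x.
Proof.
by rewrite /shear add_last_comp; congr add_last; apply/funext => y; rewrite front_add_last.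
Qed.

Lemma continuous_shear phi : continuous phi -> continuous (shear phi).
Proof.
move=> cphi; apply: continuous_add_last => x.
exact: (continuous_comp (@continuous_front x) (cphi _)).
Qed.

Definition on_last (f : R -> R) : V -> V :=
  add_last (fun x => f (x 0 ord_max) - x 0 ord_max).

Lemma on_last_comp f g x : on_last f (on_last g x) = on_last (f \o g) x.
Proof.
rewrite /on_last add_last_comp; congr add_last; apply/funext => y.
by rewrite add_last_last (addrC (y 0 ord_max)) subrK /=; ring.
Qed.

Lemma continuous_on_last f : continuous f -> continuous (on_last f).
Proof.
move=> cf; apply: continuous_add_last => x.
exact: (continuousB (continuous_comp (@continuous_last x) (cf _)) (@continuous_last x)).
Qed.

End LastCoordinate.

Section LeakyReLU.
Variable R : realType.

Lemma lrelu_ge0 b (y : R) : 0 <= y -> lrelu b y = y.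
Proof. by rewrite /lrelu => ->. Qed.

Lemma lrelu_lt0 b (y : R) : y < 0 -> lrelu b y = b * y.
Proof. by rewrite /lrelu leNgt => ->. Qed.

Lemma lreluE b (y : R) : lrelu b y = Num.max y 0 + b * Num.min y 0.
Proof.
by case: (leP 0 y) => y0; [rewrite lrelu_ge0 // mulr0 addr0 | rewrite lrelu_lt0 // add0r].
Qed.

Lemma continuous_lrelu b : continuous (@lrelu R b).
Proof.
move=> y; rewrite (funext (lreluE b)); have cst0 := @cst_continuous R R (0 : R) y.
exact: (continuousD (continuous_max (@cvg_id _ _) cst0)
  (continuousM (@cst_continuous R R b y) (continuous_min (@cvg_id _ _) cst0))).
Qed.

Lemma max0_dist_le (a b : R) : `|Num.max a 0 - Num.max b 0| <= `|a - b|.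
Proof.
rewrite ler_norml; have := ler_norm (a - b); have := ler_norm (b - a); rewrite distrC.
by case: (leP a 0) => a0; case: (leP b 0) => b0 h1 h2; apply/andP; split; lra.
Qed.

End LeakyReLU.

Section ExactNetworks.
Variables (R : realType) (n : nat).
Local Notation V := 'rV[R]_n.+1.

Definition front_ge (L : R) (x : V) := forall j : 'I_n, - L <= front x 0 j.

Lemma front_ge_coord L x (j : 'I_n.+1) : front_ge L x -> j != ord_max -> - L <= x 0 j.
Proof.
move=> xL /neq_ord_max_lt jn.
by have := xL (Ordinal jn); rewrite mxE; congr (_ <= x _ _); apply: val_inj.
Qed.

(* A layer applies one leaky-ReLU slope to all coordinates, so while bending the last one it
   passes x' unchanged only after shifting it to be nonnegative; hence exactness is asked for
   on the regions x' >= -L only, and every compact set lies in one of them. *)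
Definition nn_exact (T : V -> V) :=
  forall L, exists2 g, nn_from g & forall x, front_ge L x -> g x = T x.

Lemma nn_exact_net T : nn_from T -> nn_exact T.
Proof. by move=> T_nn L; exists T. Qed.

Lemma nn_exact_comp T1 T2 : nn_exact T1 -> nn_exact T2 ->
  (forall x, front (T2 x) = front x) -> nn_exact (T1 \o T2).
Proof.
move=> E1 E2 T2front L; have [g1 g1_nn T1g1] := E1 L; have [g2 g2_nn T2g2] := E2 L.
exists (fun x => g1 (g2 x)) => [|x xL /=]; first exact: nn_from_comp.
by rewrite T2g2 // T1g1 // /front_ge T2front.
Qed.

Lemma nn_approx_exact T : nn_exact T -> nn_approx T.
Proof.
move=> E K cK e e0; have [r r0 Kr] := compact_norm_le cK.
have [g g_nn Tg] := E r; exists g => // x Kx.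
rewrite Tg ?subrr ?normr0 // => j; rewrite mxE.
have := le_trans (mx_entry_norm_le x ord0 (widen_ord (leq_pred n.+1) j)) (Kr x Kx).
by rewrite ler_norml => /andP[].
Qed.

Definition bend (k p y : R) := p + k * lrelu k^-1 (y - p).

Lemma nn_exact_bend k p : k != 0 -> nn_exact (on_last (bend k p)).
Proof.
move=> k0 L.
pose b1 : V := \row_j (if j == ord_max then - p else L).
pose A2 : 'M[R]_n.+1 := diag_mx (\row_j (if j == ord_max then k else 1)).
pose b2 : V := \row_j (if j == ord_max then p else - L).
exists (fun x => affine A2 b2 (lrelu_vec k^-1 (affine 1 b1 x))).
  exact/nn_layer/nn_out.
move=> x xL; apply/rowP => j; rewrite /affine mul_mx_diag mulmx1 add_lastE !mxE.
case: eqP => [->|/eqP jn]; first by rewrite /bend; ring.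
by rewrite mulr1 lrelu_ge0 ?addrK // -lerBlDr sub0r; apply: front_ge_coord.
Qed.

Lemma bend_ge k p (t : R) : p <= t -> bend k p t = p + k * (t - p).
Proof. by move=> pt; rewrite /bend lrelu_ge0 // subr_ge0. Qed.

Lemma bend_le k p (t : R) : k != 0 -> t <= p -> bend k p t = t.
Proof.
move=> k0; rewrite le_eqVlt => /orP[/eqP->|tp]; first by rewrite bend_ge // subrr mulr0 addr0.
by rewrite /bend lrelu_lt0 ?subr_lt0 // mulrA mulfV // mul1r addrC subrK.
Qed.

Lemma bend_slope (M y : R) : 0 < M -> bend (1 + M^-1) 0 y = y + Num.max (y / M) 0.
Proof.
move=> M0; rewrite /bend add0r subr0.
case: (leP 0 y) => y0.
  by rewrite lrelu_ge0 // max_l ?divr_ge0 ?(ltW M0) //; ring.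
rewrite lrelu_lt0 // max_r ?ltW ?ltr_pdivrMr ?mul0r // addr0.
by rewrite mulrA mulfV ?mul1r // gt_eqF // ltr_wpDr ?invr_ge0 ?ltW.
Qed.

Lemma continuous_bend k p : continuous (bend k p).
Proof.
move=> y; apply: (continuousD (@cst_continuous _ _ p y)).
apply: (continuousM (@cst_continuous _ _ k y)).
apply: (continuous_comp (continuousB (@cvg_id _ (nbhs y)) (@cst_continuous _ _ p y))).
exact: continuous_lrelu.
Qed.

Lemma approximable_on_last_bend k p : k != 0 -> approximable (on_last (bend k p) : V -> V).
Proof.
move=> k0; split; first exact/continuous_on_last/continuous_bend.
exact/nn_approx_exact/nn_exact_bend.
Qed.

End ExactNetworks.

Section Shearable.
Variables (R : realType) (n : nat).
Local Notation V := 'rV[R]_n.+1.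
Local Notation W := 'rV[R]_n.

Lemma approximable_add_last_affine (j : 'I_n.+1) (c a : R) :
  approximable (add_last (fun x : V => c * x 0 j + a)).
Proof. by rewrite add_last_affine; exact: approximable_affine. Qed.

Definition shearable (phi : W -> R) := continuous phi /\ nn_approx (shear phi).

Lemma shearable_approximable phi : shearable phi -> approximable (shear phi).
Proof. by case=> cphi Aphi; split=> //; exact: continuous_shear. Qed.

Lemma shearable_cst a : shearable (fun _ => a).
Proof.
split=> [x|]; first exact: cst_continuous.
have -> : shear (fun _ : W => a) = add_last (fun x : V => 0 * x 0 ord_max + a).
  by apply/funext => x; congr add_last; apply/funext => y; rewrite mul0r add0r.
by case: (approximable_add_last_affine ord_max 0 a).
Qed.

Lemma shearable_coord i : shearable (fun v => v 0 i).
Proof.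
split=> [|]; first exact: coord_continuous.
have -> : shear (fun v : W => v 0 i) =
    add_last (fun x : V => 1 * x 0 (widen_ord (leq_pred n.+1) i) + 0).
  by apply/funext => x; congr add_last; apply/funext => y; rewrite mul1r addr0 mxE.
by case: (approximable_add_last_affine (widen_ord (leq_pred n.+1) i) 1 0).
Qed.

Lemma shearableD phi psi :
  shearable phi -> shearable psi -> shearable (fun v => phi v + psi v).
Proof.
move=> Sphi Spsi; split=> [x|]; first exact: (continuousD (Sphi.1 x) (Spsi.1 x)).
rewrite -(funext (shear_comp phi psi)).
by case: (approximable_comp (shearable_approximable Spsi) (shearable_approximable Sphi)).
Qed.

Lemma shearableZ c phi : shearable phi -> shearable (fun v => c * phi v).
Proof.
move=> Sphi; have [->|c0] := eqVneq c 0.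
  by under eq_fun do rewrite mul0r; exact: shearable_cst.
split=> [x|]; first exact: (continuousM (@cst_continuous _ _ c x) (Sphi.1 x)).
pose scale_last a := add_last (fun x : V => (a - 1) * x 0 ord_max + 0).
have -> : shear (fun v => c * phi v) = scale_last c \o shear phi \o scale_last c^-1.
  apply/funext => x; apply/rowP => j; rewrite /= /shear !add_lastE !front_add_last.
  by case: eqP => [->|_] //; rewrite !eqxx; field.
have Ascale a : approximable (scale_last a) by exact: approximable_add_last_affine.
by case: (approximable_comp (approximable_comp (Ascale c) (shearable_approximable Sphi))
  (Ascale c^-1)).
Qed.

(* The bend at 0 of slope 1 + 1/M, conjugated by the shears by M phi and -M phi, maps the last
   coordinate y to y + max(phi + y/M, 0), which is within |y|/M of the target. *)
Lemma shearable_relu phi : shearable phi -> shearable (fun v => Num.max (phi v) 0).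
Proof.
move=> Sphi; split=> [x|]; first exact: (continuous_max (Sphi.1 x) (@cst_continuous _ _ 0 x)).
apply: nn_approx_limit => K cK e e0; have [r r0 Kr] := compact_norm_le cK.
pose M := (r + 1) / e; have M0 : 0 < M by rewrite divr_gt0 // ltr_wpDl // ltW.
have k0 : 1 + M^-1 != 0 by rewrite gt_eqF // ltr_wpDr ?invr_ge0 ?ltW.
exists (shear (fun v => - M * phi v) \o on_last (bend (1 + M^-1) 0) \o
        shear (fun v => M * phi v)).
  by case: (approximable_comp (approximable_comp
    (shearable_approximable (shearableZ (- M) Sphi)) (approximable_on_last_bend n 0 k0))
    (shearable_approximable (shearableZ M Sphi))).
move=> x Kx.
have -> : (shear (fun v => - M * phi v) \o on_last (bend (1 + M^-1) 0) \o
    shear (fun v => M * phi v)) x =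
    add_last (fun y => Num.max (phi (front y) + y 0 ord_max / M) 0) x.
  apply/rowP => j; rewrite /= /shear /on_last !add_lastE !front_add_last !eqxx.
  case: eqP => // _; rewrite bend_slope //.
  have -> : (x 0 ord_max + M * phi (front x)) / M = phi (front x) + x 0 ord_max / M.
    by field; rewrite gt_eqF.
  ring.
rewrite (le_trans (add_last_dist _ _ _)) // (le_trans (max0_dist_le _ _)) //.
rewrite opprD addNKr normrN normrM [`|M^-1|]gtr0_norm ?invr_gt0 //.
rewrite ler_pdivrMr // /M mulrCA mulfV ?mulr1 ?gt_eqF //.
rewrite (le_trans (mx_entry_norm_le x 0 ord_max)) // (le_trans (Kr x Kx)) //.
by rewrite lerDl.
Qed.

Lemma shearable_max phi psi : shearable phi -> shearable psi ->
  shearable (fun v => Num.max (phi v) (psi v)).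
Proof.
move=> Sphi Spsi.
have -> : (fun v => Num.max (phi v) (psi v)) =
    (fun v => psi v + Num.max (phi v + (-1) * psi v) 0).
  apply/funext => v; rewrite mulN1r.
  case: (leP (psi v) (phi v)) => h.
    by rewrite max_l ?subr_ge0 //; ring.
  by rewrite max_r ?subr_le0 ?ltW //; ring.
by apply: shearableD => //; apply/shearable_relu/shearableD => //; exact: shearableZ.
Qed.

Lemma shearable_bigmax (I : Type) (r : seq I) (F : I -> W -> R) a :
  (forall i, shearable (F i)) -> shearable (fun v => \big[Num.max/a]_(i <- r) F i v).
Proof.
move=> SF; elim: r => [|i r IH]; first by under eq_fun do rewrite big_nil; exact: shearable_cst.
by under eq_fun do rewrite big_cons; exact: shearable_max.
Qed.

Lemma shearable_norm_sub c : shearable (fun v => `|v - c|).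
Proof.
have -> : (fun v => `|v - c|) = fun v => \big[Num.max/0]_(ij <- index_enum ('I_1 * 'I_n)%type)
    Num.max (v 0 ij.2 + (-1) * c 0 ij.2) ((-1) * (v 0 ij.2 + (-1) * c 0 ij.2)).
  apply/funext => v; rewrite -[`|_|]/(mx_norm _) mx_normrE; apply: eq_bigr => ij _.
  by rewrite !mulN1r maxrN !mxE ord1.
apply: shearable_bigmax => ij; apply: shearable_max; last apply: shearableZ;
  by apply: shearableD; [exact: shearable_coord | exact: shearableZ (shearable_cst _)].
Qed.

Lemma shearable_dense phi (K : set W) e : continuous phi -> compact K -> 0 < e ->
  exists2 psi, shearable psi & forall v, K v -> `|phi v - psi v| <= e.
Proof.
move=> cphi cK e0; have e20 : 0 < e / 2 by rewrite divr_gt0.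
have [B B0 phiB] := continuous_compact_norm_le cphi cK.
have [del del0 phi_unif] := continuous_compact_uniform cphi cK e20.
pose r := del / 2; have r0 : 0 < r by rewrite divr_gt0.
have [cs csK cover] := compact_ball_cover (r := fun=> r) cK (fun _ _ => r0).
pose M := 2 * B / r; have M0 : 0 <= M by rewrite divr_ge0 // ?mulr_ge0 // ltW.
have Mr : M * r = 2 * B by rewrite /M mulrAC -mulrA mulfV ?mulr1 // gt_eqF.
(* Each tent equals phi c - e/2 near c and lies below -B away from c. *)
pose tent c v := phi c - e / 2 + (- M) * Num.max (`|v - c| + (- r)) 0.
exists (fun v => \big[Num.max/(- B)]_(c <- cs) tent c v).
  apply: shearable_bigmax => c; apply/shearableD/shearableZ/shearable_relu/shearableD.
  - exact: shearable_cst.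
  - exact: shearable_norm_sub.
  - exact: shearable_cst.
move=> v Kv; have /andP[Bv vB] : - B <= phi v <= B by rewrite -ler_norml phiB.
have tent_le : \big[Num.max/(- B)]_(c <- cs) tent c v <= phi v.
  rewrite big_seq bigmax_le // => c /csK Kc.
  have := phiB c Kc; rewrite ler_norml => /andP[Bc cB].
  have t0 : 0 <= Num.max (`|v - c| + (- r)) 0 by rewrite le_max lexx orbT.
  rewrite /tent mulNr; case: (ltP `|v - c| del) => vc.
  - move: (phi_unif c v Kc); rewrite distrC => /(_ vc); rewrite ltr_norml => /andP[_ h].
    by have := mulr_ge0 M0 t0; lra.
  - have : r <= Num.max (`|v - c| + (- r)) 0 by rewrite le_max /r; apply/orP; left; lra.
    by move=> /(ler_wpM2l M0); rewrite Mr; lra.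
have le_tent : phi v - e <= \big[Num.max/(- B)]_(c <- cs) tent c v.
  have [c cs_c cv] := cover v Kv; have Kc := csK c cs_c.
  apply: le_trans (le_bigmax_seq (- B) c xpredT (fun c => tent c v) cs_c isT).
  rewrite /tent max_r; last by rewrite distrC; lra.
  have cv_del : `|c - v| < del by rewrite (lt_trans cv) // /r ltr_pdivrMr // ltr_pMr ?ltr1n.
  move: (phi_unif c v Kc cv_del); rewrite ltr_norml => /andP[h _].
  by rewrite mulr0 addr0; lra.
by rewrite ler_norml; apply/andP; split; lra.
Qed.

Lemma continuous_shearable phi : continuous phi -> shearable phi.
Proof.
move=> cphi; split=> //; apply: nn_approx_limit => K cK e e0.
have [r r0 Kr] := compact_norm_le cK.
have [psi Spsi phipsi] := shearable_dense cphi (compact_norm_ball r0) e0.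
exists (shear psi) => [|x Kx]; first exact: Spsi.2.
rewrite (le_trans (add_last_dist _ _ _)) // phipsi //= (le_trans _ (Kr x Kx)) //.
apply: mx_norm_le => // i j; rewrite !mxE ord1.
exact: mx_entry_norm_le.
Qed.

End Shearable.

Section Interpolation.
Variable R : realType.
Variables (y hv s : nat -> R).

(* The piecewise-linear function with breakpoints y 1, ..., y k and slopes s 0, ..., s k,
   written as its first affine piece composed with successive bends. *)
Fixpoint interp k (t : R) : R :=
  match k with
  | 0 => hv 0 + s 0 * (t - y 0)
  | k.+1 => interp k (bend (s k.+1 / s k) (y k.+1) t)
  end.

Hypothesis s_gt0 : forall k, 0 < s k.
Hypothesis y_le : forall k, y k <= y k.+1.
Hypothesis hv_step : forall k, hv k.+1 = hv k + s k * (y k.+1 - y k).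

Lemma interp_last k t : y k <= t -> interp k t = hv k + s k * (t - y k).
Proof.
elim: k t => [//|k IH] t yt /=; rewrite bend_ge // IH; last first.
  by rewrite (le_trans (y_le k)) // lerDl mulr_ge0 ?subr_ge0 // divr_ge0 ?ltW ?s_gt0.
by rewrite hv_step; field; rewrite gt_eqF.
Qed.

Lemma interp_next k t : t <= y k.+1 -> interp k.+1 t = interp k t.
Proof. by move=> ty /=; rewrite bend_le // gt_eqF // divr_gt0. Qed.

Lemma interp_dist (h : R -> R) e N :
  (forall j t, (j < N)%N -> y j <= t <= y j.+1 ->
     `|hv j + s j * (t - y j) - h t| <= e) ->
  forall k t, (k < N)%N -> y 0 <= t <= y k.+1 -> `|interp k t - h t| <= e.
Proof.
move=> cell; elim=> [|k IH] t kN /andP[y0t tyk]; first by apply: cell => //; rewrite y0t.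
case: (leP t (y k.+1)) => tyk'.
  by rewrite interp_next // IH ?y0t // ltnW.
by rewrite interp_last ?(ltW tyk') //; apply: cell => //; rewrite tyk (ltW tyk').
Qed.

Lemma secant_dist (h : R -> R) a b t e : a < b -> a <= t <= b ->
  h a <= h t <= h b -> h b - h a <= e ->
  `|h a + (h b - h a) / (b - a) * (t - a) - h t| <= e.
Proof.
move=> ab /andP[a_t t_b] /andP[hat htb] hab; have ba0 : 0 < b - a by rewrite subr_gt0.
have sec_ge0 : 0 <= (h b - h a) / (b - a) * (t - a).
  by rewrite mulr_ge0 ?divr_ge0 ?subr_ge0 // ?(le_trans hat htb) ?ltW.
have sec_le : (h b - h a) / (b - a) * (t - a) <= h b - h a.
  by rewrite mulrAC ler_pdivrMr // ler_wpM2l ?subr_ge0 ?(le_trans hat) // lerD2r.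
move: sec_ge0 sec_le; set S := _ * (t - a) => S0 Sh.
by rewrite ler_norml; apply/andP; split; lra.
Qed.

End Interpolation.

Section MonotoneLast.
Variables (R : realType) (n : nat).
Local Notation V := 'rV[R]_n.+1.

Lemma nn_exact_on_last_interp (y hv s : nat -> R) k : (forall k, 0 < s k) ->
  nn_exact (on_last (interp y hv s k) : V -> V).
Proof.
move=> s_gt0; elim: k => [|k IH].
  have -> : on_last (interp y hv s 0) =
      add_last (fun x : V => (s 0 - 1) * x 0 ord_max + (hv 0 - s 0 * y 0)).
    by apply/funext => x; congr add_last; apply/funext => z /=; ring.
  by apply/nn_exact_net; rewrite add_last_affine; exact: nn_out.
have -> : on_last (interp y hv s k.+1) =
    on_last (interp y hv s k) \o on_last (bend (s k.+1 / s k) (y k.+1)) :> (V -> V).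
  by apply/funext => x; rewrite /= on_last_comp.
apply: nn_exact_comp IH _ (front_add_last _); apply: nn_exact_bend.
by rewrite gt_eqF // divr_gt0.
Qed.

Lemma approximable_on_last_increasing (h : R -> R) : continuous h ->
  {homo h : a b / a < b} -> approximable (on_last h : V -> V).
Proof.
move=> ch hinc; split; first exact: continuous_on_last.
have h_mono a b : a <= b -> h a <= h b.
  by rewrite le_eqVlt => /orP[/eqP ->//|/hinc/ltW].
apply: nn_approx_limit => K cK e e0; have [r r0 Kr] := compact_norm_le cK.
have [del del0 h_unif] := continuous_compact_uniform ch (@segment_compact R (- r) r) e0.
pose N := (Num.Def.archi_bound (2 * r / del)).+1.
have N0 : (0 < N%:R :> R) by rewrite ltr0n.
pose D := 2 * r / N%:R; have D0 : 0 < D by rewrite divr_gt0 // mulr_gt0.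
have D_del : D < del.
  rewrite /D ltr_pdivrMr // [del * _]mulrC -ltr_pdivrMr // (lt_trans (archi_boundP _)) //.
    by rewrite divr_ge0 // ?mulr_ge0 // ltW.
  by rewrite ltr_nat.
pose y k := - r + k%:R * D; pose hv k := h (y k).
pose s k := (hv k.+1 - hv k) / (y k.+1 - y k).
have yS k : y k.+1 - y k = D by rewrite /y -addn1 natrD; ring.
have y_lt k : y k < y k.+1 by rewrite -subr_gt0 yS.
have s_gt0 k : 0 < s k by rewrite divr_gt0 // subr_gt0 // hinc.
have hv_step k : hv k.+1 = hv k + s k * (y k.+1 - y k).
  by rewrite /s yS; field; rewrite gt_eqF.
have y_mono j k : (j <= k)%N -> y j <= y k.
  by move=> jk; rewrite /y lerD2l ler_wpM2r ?ler_nat // ltW.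
have y0 : y 0 = - r by rewrite /y mul0r addr0.
have yN : y N = r by rewrite /y /D mulrCA mulfV ?mulr1 ?gt_eqF //; ring.
exists (on_last (interp y hv s N.-1) : V -> V).
  exact/nn_approx_exact/nn_exact_on_last_interp.
move=> x Kx; rewrite (le_trans (add_last_dist _ _ _)) // opprB addrA subrK distrC.
have /andP[rx xr] : - r <= x 0 ord_max <= r.
  by rewrite -ler_norml (le_trans (mx_entry_norm_le _ _ _)) ?Kr.
apply: (interp_dist s_gt0 (fun k => ltW (y_lt k)) hv_step (N := N)); last 2 first.
- by rewrite prednK.
- by rewrite y0 prednK // yN rx.
move=> j t jN /andP[yjt tyj]; apply: secant_dist => //; first by rewrite yjt.
  by rewrite !h_mono.
have yj_in : `[- r, r] (y j) by rewrite /= in_itv /= -y0 -yN !y_mono // ltnW.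
have := h_unif _ (y j.+1) yj_in; rewrite distrC yS gtr0_norm // => /(_ D_del).
by rewrite distrC => /(le_lt_trans (ler_norm _))/ltW.
Qed.

End MonotoneLast.

Section CouplingFlows.
Variables (R : realType) (n : nat).
Local Notation V := 'rV[R]_n.+1.
Local Notation W := 'rV[R]_n.

Definition ln_ext (y : R) := ln (Num.max y 1) + Num.min y 1 - 1.

Lemma ln_extE y : ln_ext y = if y <= 1 then y - 1 else ln y.
Proof. by rewrite /ln_ext; case: (leP y 1) => _; rewrite ?ln1 ?add0r ?addrK. Qed.

Lemma ln_ext_increasing : {homo ln_ext : a b / a < b}.
Proof.
move=> a b ab; rewrite !ln_extE.
case: (leP b 1) => b1; first by rewrite ifT ?ltrD2r // (le_trans (ltW ab)).
case: (leP a 1) => a1; last by rewrite ltr_ln ?posrE // (lt_trans ltr01).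
have : ln 1 < ln b by rewrite ltr_ln ?posrE // (lt_trans ltr01).
by rewrite ln1; lra.
Qed.

Lemma continuous_ln_ext : continuous ln_ext.
Proof.
move=> y; have max_gt0 : 0 < Num.max y 1 by rewrite lt_max ltr01 orbT.
have cst1 := @cst_continuous R R (1 : R) y.
exact: (continuousB (continuousD (continuous_comp (continuous_max (@cvg_id _ _) cst1)
  (continuous_ln max_gt0)) (continuous_min (@cvg_id _ _) cst1)) cst1).
Qed.

Definition coupling (s t : W -> R) : V -> V :=
  add_last (fun x => (expR (s (front x)) - 1) * x 0 ord_max + t (front x)).

Lemma approximable_coupling s t : continuous s -> continuous t ->
  approximable (coupling s t).
Proof.
move=> cs ct; split.
  apply: continuous_add_last => x; have cfront := @continuous_front R n x.
  exact: (continuousD (continuousM (continuousB (continuous_comp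
    (continuous_comp cfront (cs _)) (@continuous_expR R _)) (@cst_continuous _ R (1 : R) x))
    (@continuous_last R n x)) (continuous_comp cfront (ct _))).
apply: nn_approx_limit => K cK e e0; have [r r0 Kr] := compact_norm_le cK.
(* On K we have y + C > 1, where ln_ext agrees with ln. *)
pose C := r + 2; pose t' v := t v - C * expR (s v).
have ct' : continuous t'.
  move=> v; exact: (continuousB (ct v) (continuousM (@cst_continuous _ _ C v)
    (continuous_comp (cs v) (@continuous_expR R _)))).
exists (shear t' \o on_last expR \o shear s \o on_last ln_ext \o shear (fun=> C)).
  have exp_inc : {homo @expR R : a b / a < b} by move=> a b; rewrite ltr_expR.
  have [] := approximable_comp (approximable_comp (approximable_comp (approximable_comp
    (shearable_approximable (continuous_shearable ct'))
    (approximable_on_last_increasing n (@continuous_expR R) exp_inc))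
    (shearable_approximable (continuous_shearable cs)))
    (approximable_on_last_increasing n continuous_ln_ext ln_ext_increasing))
    (shearable_approximable (shearable_cst n C)).
  by [].
move=> x Kx; rewrite [X in `|_ - X|](_ : _ = coupling s t x) ?subrr ?normr0 ?ltW //.
apply/rowP => j.
rewrite /coupling /shear /on_last /= !add_lastE !front_add_last !eqxx.
case: eqP => // ->; have /andP[rx _] : - r <= x 0 ord_max <= r.
  by rewrite -ler_norml (le_trans (mx_entry_norm_le _ _ _)) ?Kr.
have xC1 : 1 < x 0 ord_max + C by rewrite /C; lra.
rewrite ln_extE leNgt xC1 /= [_ + (ln _ - _)]addrC subrK.
by rewrite [X in X + t' _]addrC subrK expRD lnK ?posrE /t'; [ring | lra].
Qed.

End CouplingFlows.

Lemma approximable_ACF (R : realType) n (g : 'rV[R]_n.+1 -> 'rV[R]_n.+1) :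
  ACF g -> approximable g.
Proof.
move=> [s [t [cs [ct gE]]]]; suff -> : g = coupling s t by exact: approximable_coupling.
apply/funext => x; apply/rowP => j; rewrite gE add_lastE !mxE /=.
case: eqP => [->|/eqP jn]; first by rewrite ltnn /=; ring.
by rewrite ifT // neq_ord_max_lt.
Qed.

Lemma norm_inf_le (R : realType) d (v : 'rV[R]_d) : norm_inf v <= `|v|.
Proof. by apply: bigmax_le => // i _; exact: mx_entry_norm_le. Qed.

Theorem mainTheorem7 (R : realType) (d : nat) (hd : (2 <= d)%N)
  (f : 'rV[R]_d -> 'rV[R]_d) (K : set 'rV[R]_d) (eps : R) :
  @INN R d (@ACF R d) f -> compact K -> 0 < eps ->
  exists g, @NN_LReLU R d g /\
    (ereal_sup [set (@norm_inf R d (f x - g x))%:E | x in K] < eps%:E)%E.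
Proof.
case: d hd f K => [//|n] _ f K INN_f cK eps0; have eps20 : 0 < eps / 2 by rewrite divr_gt0.
have [_ f_approx] := approximable_INN (@approximable_ACF R n) INN_f.
have [g g_nn fg] := f_approx K cK _ eps20; exists g; split=> //.
apply: (@le_lt_trans _ _ (eps / 2)%:E); last by rewrite lte_fin; lra.
apply: ge_ereal_sup => _ [x Kx <-]; rewrite lee_fin.
exact: le_trans (norm_inf_le _) (ltW (fg x Kx)).
Qed.
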